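(* Let $(R,\sigma_t)$ be a $\lambda$-ring and let $(P_\alpha)_{\alpha\in A}$ be a (possibly infinite) family of polynomials in $R_{sp}[T]$. Then there is a $\lambda$-ring homomorphism $(R,\sigma_t)\to(R',\sigma'_t)$ together with a family $(x_\alpha)_{\alpha\in A}$ of elements of $R'$ such that (i) $x_\alpha\in R'_{sp}$ for all $\alpha$ and (ii) $P_\alpha(x_\alpha)=0$ in $R'$ for all $\alpha$, which is universal with these properties: for every $\lambda$-ring homomorphism $R\to R''$ and family $(y_\alpha)$ in $R''_{sp}$ with $P_\alpha(y_\alpha)=0$ (coefficients mapped to $R''$), there is a unique $\lambda$-ring homomorphism $R'\to R''$ under $R$ mapping $x_\alpha$ to $y_\alpha$. In particular $(R',(x_\alpha))$ is unique up to isomorphism; it is denoted $R\langle x_\alpha\mid\alpha\in A\rangle$.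
   Context: A $\lambda$-ring is a commutative ring $R$ with unit and a map $\sigma_t:R\to1+tR[[t]]$, $\sigma_t(a)=\sum_{n\ge0}\sigma^n(a)t^n$, with $\sigma_t(0)=1$, $\sigma_t(a+b)=\sigma_t(a)\sigma_t(b)$ and $\sigma_t(a)\equiv1+at\pmod{t^2}$; homomorphisms are ring homomorphisms commuting with $\sigma_t$. Polynomials $P^{m,n}$: with variables $y_1,\dots,y_m$, $x_1,\dots,x_{mn}$ and $h_d$ the $d$-th complete homogeneous symmetric polynomial, $P^{m,n}$ is the polynomial with $h_m(\{y_i\bar x^{\bar n}\})=P^{m,n}(h_1(\bar y),\dots,h_m(\bar y),h_1(\bar x),\dots,h_{mn}(\bar x))$, where $h_m$ is evaluated on the family of all products $y_i\bar x^{\bar n}$ with $\bar x^{\bar n}$ ranging over monomials of total degree $n$ in $x_1,\dots,x_{mn}$. For a $\lambda$-ring $R$: $R_{sp}:=\{a\in R\mid \sigma^m(b\sigma^n(a))=P^{m,n}(\sigma^1(b),\dots,\sigma^m(b),\sigma^1(a),\dots,\sigma^{mn}(a))\ \forall b\in R,\ m,n\in\mathbb{N}\}$. *)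

From HB Require Import structures.
From mathcomp Require Import all_boot all_order all_algebra.
From mathcomp Require Import mpoly.
Set Implicit Arguments. Unset Strict Implicit. Unset Printing Implicit Defensive.
Import Order.TTheory GRing.Theory.
Local Open Scope ring_scope.

(* Rings are commutative with unit, possibly the zero ring (comPzRingType):
   e.g. adjoining a root of the constant polynomial 1 forces R' = 0. *)

(* sigma_t(a) = \sum_n sig n a t^n ; lambda-ring axioms of the paper. *)
Definition is_lambda (R : comPzRingType) (sig : nat -> R -> R) : Prop :=
  [/\ (forall a, sig 0%N a = 1),
      (forall a, sig 1%N a = a),
      (forall k, sig k.+1 0 = 0) &
      (forall k a b, sig k (a + b) = \sum_(i < k.+1) sig i a * sig (k - i)%N b)].

Definition ring_hom (R S : comPzRingType) (f : R -> S) : Prop :=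
  [/\ f 1 = 1, (forall a b, f (a + b) = f a + f b) & (forall a b, f (a * b) = f a * f b)].

Definition lambda_hom (R S : comPzRingType) (sR : nat -> R -> R) (sS : nat -> S -> S)
  (f : R -> S) : Prop :=
  ring_hom f /\ (forall k a, f (sR k a) = sS k (f a)).

(* complete homogeneous symmetric polynomial h_d evaluated on a finite family z:
   sum over all multisets of size d of indices of the corresponding monomial. *)
Definition hfam (R : comPzRingType) (J : finType) (z : J -> R) (d : nat) : R :=
  \sum_(f : {ffun J -> 'I_d.+1} | (\sum_j (f j : nat) == d)%N) \prod_j z j ^+ f j.

Definition meval_int (N : nat) (S : comPzRingType) (Q : {mpoly int[N]}) (v : 'I_N -> S) : S :=
  \sum_(mo <- msupp Q) (Q@_mo)%:~R * \prod_(i < N) v i ^+ mo i.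

Section Pmn.
Variables m n : nat.
Local Notation V := {mpoly int[m + m * n]}.
Definition yvar (i : 'I_m) : V := 'X_(lshift (m * n) i).
Definition xvar (k : 'I_(m * n)) : V := 'X_(rshift m k).
Definition degn_mono := {mo : 'X_{1..(m * n) < n.+1} | mdeg (bmnm mo) == n}.
Definition xmono (mo : degn_mono) : V :=
  \prod_(k < m * n) xvar k ^+ (bmnm (val mo) k).
Definition Pfamily (p : 'I_m * degn_mono) : V := yvar p.1 * xmono p.2.
Definition hpoint (j : 'I_(m + m * n)) : V :=
  match split j with inl i => hfam yvar i.+1 | inr k => hfam xvar k.+1 end.
Definition is_Pmn (Q : {mpoly int[m + m * n]}) : Prop :=
  hfam Pfamily m = meval_int Q hpoint.
End Pmn.

(* R_sp.  P^{m,n} is unique (the h's of disjoint variable sets are algebraically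
   independent), so "there is Q = P^{m,n} with ..." is "with Q := P^{m,n}". *)
Definition lsp (R : comPzRingType) (sig : nat -> R -> R) (a : R) : Prop :=
  forall (b : R) (m n : nat), exists Q : {mpoly int[m + m * n]},
    is_Pmn Q /\
    sig m (b * sig n a) =
      meval_int Q (fun j => match split j with
                            | inl i => sig i.+1 b | inr k => sig k.+1 a end).

(* one-variable polynomials as coefficient lists (lowest degree first) *)
Definition peval (R : comPzRingType) (s : seq R) (x : R) : R :=
  \sum_(i < size s) s`_i * x ^+ i.

From HB Require Import structures.
From mathcomp Require Import all_boot all_order all_algebra.
From mathcomp Require Import mpoly.
From mathcomp Require Import boolp.
From mathcomp Require Import ring.
From mathcomp Require Import zify.
Set Implicit Arguments. Unset Strict Implicit. Unset Printing Implicit Defensive.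
Import Order.TTheory GRing.Theory.
Local Open Scope ring_scope.

(* R<x_al> is built impredicatively: terms over R and the x_al in the ring
   operations and the sig^k are identified when they evaluate equally in every
   target, i.e. every lambda-ring R'' with a lambda-map R -> R'' and special
   roots y_al of the P_al.  The classes form a lambda-ring, evaluation is the
   universal map, and a lambda-map out of the quotient is determined by the
   generators.  The one subtle point is that x_al is special: this needs a
   single polynomial P^{m,n} valid in all targets at once, i.e. uniqueness of
   P^{m,n}.  It holds because h_1(y),...,h_m(y),h_1(x),...,h_{mn}(x) are
   algebraically independent: Newton's identities transform them polynomially
   into the (signed) elementary symmetric polynomials of the two blocks and
   back, and the lexicographic leading monomials of the latter are triangular,
   hence multiplicatively independent. *)

Section RingHom.
Variables (S T : comPzRingType) (phi : S -> T).
Hypothesis phi_hom : ring_hom phi.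

Lemma ring_hom1 : phi 1 = 1. Proof. by case: phi_hom. Qed.
Lemma ring_homD a b : phi (a + b) = phi a + phi b. Proof. by case: phi_hom. Qed.
Lemma ring_homM a b : phi (a * b) = phi a * phi b. Proof. by case: phi_hom. Qed.

Lemma ring_hom0 : phi 0 = 0.
Proof. by apply/(@addrI _ (phi 0)); rewrite -ring_homD !addr0. Qed.

Lemma ring_homN a : phi (- a) = - phi a.
Proof. by apply/(@addIr _ (phi a)); rewrite -ring_homD !addNr ring_hom0. Qed.

Lemma ring_hom_sum (I : Type) (r : seq I) (p : pred I) (F : I -> S) :
  phi (\sum_(i <- r | p i) F i) = \sum_(i <- r | p i) phi (F i).
Proof. exact: (big_morph phi ring_homD ring_hom0). Qed.

Lemma ring_hom_prod (I : Type) (r : seq I) (p : pred I) (F : I -> S) :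
  phi (\prod_(i <- r | p i) F i) = \prod_(i <- r | p i) phi (F i).
Proof. exact: (big_morph phi ring_homM ring_hom1). Qed.

Lemma ring_homX a n : phi (a ^+ n) = phi a ^+ n.
Proof. by elim: n => [|n IHn]; rewrite ?ring_hom1 // !exprS ring_homM IHn. Qed.

Lemma ring_hom_nat n : phi n%:R = n%:R.
Proof. by elim: n => [|n IHn]; rewrite ?ring_hom0 // !mulrS ring_homD IHn ring_hom1. Qed.

Lemma ring_hom_int (z : int) : phi z%:~R = z%:~R.
Proof. by case: z => n; rewrite ?NegzE ?mulrNz ?ring_homN /intmul ring_hom_nat. Qed.

Lemma ring_hom_meval N (Q : {mpoly int[N]}) (v : 'I_N -> S) :
  phi (meval_int Q v) = meval_int Q (phi \o v).
Proof.
rewrite /meval_int ring_hom_sum; apply: eq_bigr => mo _.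
rewrite ring_homM ring_hom_int ring_hom_prod; congr (_ * _).
by apply: eq_bigr => i _; rewrite ring_homX.
Qed.

Lemma ring_hom_peval (s : seq S) x : phi (peval s x) = peval (map phi s) (phi x).
Proof.
rewrite /peval ring_hom_sum size_map; apply: eq_bigr => i _.
by rewrite ring_homM ring_homX (nth_map 0) // ring_hom0.
Qed.

End RingHom.

Section SeriesInverse.
Variable S : comPzRingType.

(* [series_inv v k] is the [k]-th coefficient of [(1 + \sum_(i > 0) v i t^i)^-1];
   [v 0] is ignored.  The fuel [f] only has to be at least [k]. *)
Fixpoint series_inv_rec (v : nat -> S) (f k : nat) : S :=
  if f is f'.+1 then
    (if k is k'.+1 then - \sum_(i < k'.+1) v i.+1 * series_inv_rec v f' (k' - i)%N else 1)
  else 1.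
Definition series_inv v k := series_inv_rec v k k.

Lemma series_inv_rec_fuel v f f' k :
  (k <= f)%N -> (k <= f')%N -> series_inv_rec v f k = series_inv_rec v f' k.
Proof.
elim: f k f' => [|f IHf] k f'; first by rewrite leqn0 => /eqP -> _; case: f'.
case: k => [|k] kf; first by case: f'.
case: f' => [//|f'] kf' /=; congr (- _); apply: eq_bigr => i _.
by rewrite (IHf _ f') // (leq_trans (leq_subr _ _)).
Qed.

Lemma series_inv0 v : series_inv v 0 = 1. Proof. by []. Qed.

Lemma series_invS v k :
  series_inv v k.+1 = - \sum_(i < k.+1) v i.+1 * series_inv v (k - i)%N.
Proof.
rewrite /series_inv /=; congr (- _); apply: eq_bigr => i _.
by rewrite (@series_inv_rec_fuel v k (k - i)%N) // leq_subr.
Qed.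

Lemma eq_series_inv v w k :
  (forall i, (0 < i <= k)%N -> v i = w i) -> series_inv v k = series_inv w k.
Proof.
elim/ltn_ind: k => -[//|n] IHn vw; rewrite !series_invS.
congr (- _); apply: eq_bigr => i _.
have vw_sub j : (0 < j <= n - i)%N -> v j = w j.
  by case/andP=> j0 ji; apply: vw; rewrite j0 (leq_trans ji) // (leq_trans (leq_subr _ _)).
by rewrite (IHn _ _ vw_sub) ?ltnS ?leq_subr // vw // ltnS ltn_ord.
Qed.

Lemma series_inv_unique (a b : nat -> S) N : a 0%N = 1 -> b 0%N = 1 ->
  (forall k, (0 < k <= N)%N -> \sum_(i < k.+1) a i * b (k - i)%N = 0) ->
  forall k, (k <= N)%N -> b k = series_inv a k.
Proof.
move=> a0 b0 ab; elim/ltn_ind => -[//|n] IHn nN.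
have := ab n.+1 nN; rewrite big_ord_recl a0 mul1r subn0 => /eqP.
rewrite addr_eq0 => /eqP ->; rewrite series_invS; congr (- _); apply: eq_bigr => i _.
by rewrite lift0 subSS IHn // ?ltnS ?leq_subr // (leq_trans (leq_subr i n) (ltnW nN)).
Qed.

Lemma conv_sym (a b : nat -> S) k :
  \sum_(i < k.+1) a i * b (k - i)%N = \sum_(i < k.+1) b i * a (k - i)%N.
Proof.
rewrite (reindex_inj rev_ord_inj) /=; apply: eq_bigr => i _.
by rewrite subKn; [rewrite mulrC | rewrite -ltnS].
Qed.

End SeriesInverse.

Lemma rmorph_series_inv (S T : comPzRingType) (phi : {rmorphism S -> T}) v k :
  phi (series_inv v k) = series_inv (phi \o v) k.
Proof.
elim/ltn_ind: k => -[|n] IHn; first by rewrite !series_inv0 rmorph1.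
rewrite !series_invS rmorphN rmorph_sum; congr (- _); apply: eq_bigr => i _.
by rewrite rmorphM IHn // ltnS leq_subr.
Qed.

Section Newton.
Variables (S : comNzRingType) (J : finType) (z : J -> S).

(* [efam k] is [(-1)^k e_k(z)]. *)
Definition efam k : S := (\prod_j (1 - (z j)%:P * 'X))`_k.

Definition geom_trunc d (a : S) : {poly S} := \sum_(i < d.+1) (a%:P * 'X) ^+ i.

Lemma prod_CX_exp (f : J -> nat) :
  \prod_j ((z j)%:P * 'X) ^+ f j = (\prod_j z j ^+ f j)%:P * 'X^(\sum_j f j).
Proof.
under eq_bigr do rewrite exprMn.
rewrite big_split /= prodrXr rmorph_prod /=.
by congr (_ * _); apply: eq_bigr => j _; rewrite rmorphXn.
Qed.

Lemma hfam_coef d : hfam z d = (\prod_j geom_trunc d (z j))`_d.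
Proof.
rewrite /geom_trunc bigA_distr_bigA coef_sum /hfam.
rewrite [RHS](bigID (fun f : {ffun J -> 'I_d.+1} => \sum_j (f j : nat) == d)%N) /=.
rewrite [X in _ + X]big1 ?addr0 => [|f /negbTE Hf].
  apply: eq_bigr => f /eqP Hf.
  by rewrite (prod_CX_exp (fun j => f j : nat)) coefCM coefXn Hf eqxx mulr1.
by rewrite (prod_CX_exp (fun j => f j : nat)) coefCM coefXn eq_sym Hf mulr0.
Qed.

Lemma prod_eq_modXn (I : Type) (r : seq I) (p q : I -> {poly S}) n :
  (forall i, exists s, p i = q i + 'X^n * s) ->
  exists s, \prod_(i <- r) p i = \prod_(i <- r) q i + 'X^n * s.
Proof.
move=> pq; elim: r => [|i r [s IHs]]; first by exists 0; rewrite !big_nil mulr0 addr0.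
have [t Ht] := pq i.
exists (q i * s + t * \prod_(j <- r) q j + t * 'X^n * s).
rewrite !big_cons Ht IHs; ring.
Qed.

Lemma geom_trunc_modXn k d (a : S) : (k <= d)%N ->
  exists s, geom_trunc d a = geom_trunc k a + 'X^(k.+1) * s.
Proof.
move=> kd; rewrite /geom_trunc.
exists ((a%:P) ^+ k.+1 * \sum_(k.+1 <= i < d.+1) (a%:P * 'X) ^+ (i - k.+1)).
rewrite -!(big_mkord xpredT (fun i => (a%:P * 'X) ^+ i)).
rewrite (big_cat_nat _ (n := k.+1)) //=; congr (_ + _).
rewrite mulrA [_ * _%:P ^+ _]mulrC -exprMn big_distrr /=.
rewrite big_nat_cond [RHS]big_nat_cond; apply: eq_bigr => i /andP[/andP[Hi _] _].
by rewrite -exprD subnKC.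
Qed.

Lemma hfam_coef_le k d : (k <= d)%N -> (\prod_j geom_trunc d (z j))`_k = hfam z k.
Proof.
move=> kd; rewrite hfam_coef.
have [s ->] := prod_eq_modXn (index_enum J) (fun j => geom_trunc_modXn (z j) kd).
by rewrite coefD coefXnM ltnSn addr0.
Qed.

Lemma efam0 : efam 0 = 1.
Proof.
by rewrite /efam coef0_prod big1 // => j _; rewrite coefB coef1 coefCM coefX mulr0 subr0.
Qed.

Lemma hfam0 : hfam z 0 = 1.
Proof.
by rewrite hfam_coef /geom_trunc big1 ?coef1 // => j _; rewrite big_ord1 expr0.
Qed.

Lemma efamE k : efam k = \sum_(B : {set J} | #|B| == k) \prod_(j in B) - z j.
Proof.
rewrite /efam.
have -> : \prod_j (1 - (z j)%:P * 'X) = \prod_j ((- z j)%:P * 'X + 1).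
  by apply: eq_bigr => j _; rewrite polyCN mulNr addrC.
rewrite bigA_distr coef_sum [RHS]big_mkcond /=; apply: eq_bigr => B _.
rewrite -big_mkcond /= big_split /= -rmorph_prod prodr_const coefCM coefXn.
by rewrite eq_sym; case: eqP; rewrite ?mulr1 ?mulr0.
Qed.

(* Newton's identities: [(1 - z t) (1 + z t + ... + (z t)^k) = 1 - (z t)^(k+1)]. *)
Lemma efam_hfam_conv k : (0 < k)%N -> \sum_(i < k.+1) efam i * hfam z (k - i)%N = 0.
Proof.
move=> k_gt0.
have prod_geom : (\prod_j (1 - (z j)%:P * 'X)) * (\prod_j geom_trunc k (z j)) =
                 \prod_j (1 - ((z j)%:P * 'X) ^+ k.+1).
  rewrite -big_split /=; apply: eq_bigr => j _.
  by rewrite /geom_trunc -[1 - _]opprB mulNr -subrX1 opprB.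
have [s Hs] : exists s, \prod_j (1 - ((z j)%:P * 'X) ^+ k.+1) =
                        \prod_(j : J) (1 : {poly S}) + 'X^(k.+1) * s.
  apply: prod_eq_modXn => j; exists (- (z j)%:P ^+ k.+1).
  by rewrite exprMn mulrN mulrC.
transitivity ((\prod_j (1 - (z j)%:P * 'X)) * (\prod_j geom_trunc k (z j)))`_k.
  by rewrite coefM; apply: eq_bigr => i _; rewrite (hfam_coef_le (leq_subr i k)).
rewrite prod_geom Hs big1 // coefD coefXnM ltnSn addr0 coef1.
by case: k k_gt0 {prod_geom Hs}.
Qed.

Lemma series_inv_efam k : series_inv efam k = hfam z k.
Proof.
symmetry; apply: (@series_inv_unique _ _ _ k) => //; first exact: efam0.
  exact: hfam0.
by move=> k' /andP[k0 _]; apply: efam_hfam_conv.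
Qed.

Lemma series_inv_hfam k : series_inv (hfam z) k = efam k.
Proof.
symmetry; apply: (@series_inv_unique _ _ _ k) => //; first exact: hfam0.
  exact: efam0.
by move=> k' /andP[k0 _]; rewrite conv_sym; apply: efam_hfam_conv.
Qed.

End Newton.

Lemma prodX_mesym1 (M : nat) (B : {set 'I_M}) :
  \prod_(i in B) 'X_i = 'X_[mesym1 B] :> {mpoly int[M]}.
Proof.
rewrite mprodXE; congr 'X_[_]; apply/mnmP=> i; rewrite mnmE mnm_sumE big_mkcond /=.
rewrite (bigD1 i) //= mnmE eqxx /= big1 ?addn0 // => j ne_ji.
by case: (_ \in _); rewrite // mnmE (negbTE ne_ji).
Qed.

Lemma mesym1_le_interval (M c k : nat) (B D : {set 'I_M}) :
  (forall nu : 'I_M, (nu \in D) = (c <= nu < c + k)%N) ->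
  #|B| = #|D| -> (forall nu : 'I_M, nu \in B -> (c <= nu)%N) ->
  (mesym1 B <= mesym1 D)%O.
Proof.
move=> D_int BD B_ge.
have [/existsP[nu nuDB]|] := boolP [exists nu, nu \in D :\: B]; last first.
  rewrite negb_exists => /forallP DB.
  suff -> : B = D by [].
  have sDB : D \subset B.
    by apply/subsetP => x xD; move: (DB x); rewrite in_setD xD andbT negbK.
  by apply/esym/eqP; rewrite eqEcard sDB BD leqnn.
apply/ltW/ltmcP; first by rewrite !mdeg_mesym1.
exists [arg min_(j < nu | j \in D :\: B) j]; case: arg_minnP => //= i0 i0DB i0_min.
  move=> j lt_j_i0; rewrite !mnmE.
  move: i0DB; rewrite in_setD (D_int i0) => /andP[_ /andP[c_i0 i0_ck]].
  case jD : (j \in D); case jB : (j \in B) => //.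
    by have := i0_min j; rewrite in_setD jD jB leqNgt lt_j_i0 => /(_ isT).
  move: jD; rewrite D_int (B_ge _ jB) /= => /negbT; rewrite -leqNgt => j_ge.
  by have := leq_ltn_trans j_ge (ltn_trans lt_j_i0 i0_ck); rewrite ltnn.
by rewrite !mnmE; move: i0DB; rewrite in_setD => /andP[/negbTE -> ->].
Qed.

Lemma mlead_max (M : nat) (p : {mpoly int[M]}) mu :
  mu \in msupp p -> (forall nu, nu \in msupp p -> (nu <= mu)%O) -> mlead p = mu.
Proof.
move=> mu_p mu_max; apply/le_anti; rewrite msupp_le_mlead // andbT.
by apply/mu_max/mlead_supp; apply: contraTneq mu_p => ->; rewrite msupp0.
Qed.

Section Block.
Variables (N M c : nat) (sg : 'I_N -> 'I_M).
Hypothesis sgE : forall i, val (sg i) = (c + val i)%N.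

Lemma block_inj : injective sg.
Proof. by move=> i j /(congr1 val); rewrite !sgE => /addnI /val_inj. Qed.

Definition block_var (i : 'I_N) : {mpoly int[M]} := 'X_(sg i).

Definition block_esym k : {mpoly int[M]} :=
  \sum_(B : {set 'I_N} | #|B| == k) 'X_[mesym1 (sg @: B)].

Lemma efam_block k : efam block_var k = (-1) ^+ k *: block_esym k.
Proof.
rewrite efamE /block_esym scaler_sumr /=; apply: eq_bigr => B /eqP cardB.
rewrite prodrN cardB -prodX_mesym1 big_imset /=; last by move=> i j _ _ /block_inj.
by rewrite -mul_mpolyC rmorphXn rmorphN1.
Qed.

Definition block_init k : {set 'I_N} := [set i : 'I_N | (i < k)%N].

Lemma card_block_init k : (k <= N)%N -> #|block_init k| = k.
Proof.
move=> kN; rewrite -sum1dep_card -(big_ord_widen _ (fun _ => 1%N)) //=.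
by rewrite sum1_card card_ord.
Qed.

Lemma mem_block_init k (nu : 'I_M) : (k <= N)%N ->
  (nu \in sg @: block_init k) = (c <= nu < c + k)%N.
Proof.
move=> kN; apply/imsetP/idP => [[i]|/andP[c_nu nu_ck]].
  by rewrite inE => ik ->; rewrite sgE leq_addr ltn_add2l.
have lt_nu : (nu - c < N)%N by rewrite ltn_subLR // (leq_trans nu_ck) // leq_add2l.
exists (Ordinal lt_nu); first by rewrite inE /= ltn_subLR.
by apply/val_inj; rewrite sgE /= subnKC.
Qed.

Lemma mlead_block_esym k : (k <= N)%N ->
  mesym1 (sg @: block_init k) \in msupp (block_esym k) /\
  mlead (block_esym k) = mesym1 (sg @: block_init k).
Proof.
move=> kN.
have mesym_inj : injective (fun B : {set 'I_N} => mesym1 (sg @: B)).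
  by move=> B1 B2 /inj_mesym1 /imset_inj; apply; exact: block_inj.
have coefE nu : (block_esym k)@_nu =
    \sum_(B : {set 'I_N} | #|B| == k) (mesym1 (sg @: B) == nu)%:R.
  by rewrite raddf_sum /=; apply: eq_bigr => B _; rewrite mcoeffX.
have init_supp : mesym1 (sg @: block_init k) \in msupp (block_esym k).
  rewrite mcoeff_msupp coefE (bigD1 (block_init k)) /=; last by rewrite card_block_init.
  rewrite eqxx big1 ?addr0 ?oner_eq0 // => B /andP[_ ne].
  by case: eqP => // /mesym_inj eqB; rewrite eqB eqxx in ne.
split => //; apply: mlead_max => // nu; rewrite mcoeff_msupp coefE.
have [/existsP[B /andP[/eqP cardB /eqP <-]] _|] :=
  boolP [exists B : {set 'I_N}, (#|B| == k) && (mesym1 (sg @: B) == nu)].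
  apply: (@mesym1_le_interval M c k) => [nu'||nu'].
  - exact: mem_block_init.
  - by rewrite !card_imset //; try exact: block_inj; rewrite cardB card_block_init.
  - by case/imsetP => i _ ->; rewrite sgE leq_addr.
rewrite negb_exists => /forallP noB; rewrite big1 ?eqxx // => B cardB.
by have := noB B; rewrite cardB /= => /negbTE ->.
Qed.

Lemma mlead_efam_block k : (k <= N)%N ->
  efam block_var k != 0 /\ mlead (efam block_var k) = mesym1 (sg @: block_init k).
Proof.
move=> kN; have [init_supp lead] := mlead_block_esym kN.
have sign_neq0 : ((-1) ^+ k : int) != 0 by rewrite signr_eq0.
rewrite efam_block mleadZ // lead -mul_mpolyC mulf_eq0 mpolyC_eq0 (negbTE sign_neq0).
by split => //; apply: contraTneq init_supp => ->; rewrite msupp0.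
Qed.

End Block.

Lemma exists_max_seq (T : eqType) (d : Order.disp_t) (U : orderType d)
    (f : T -> U) (s : seq T) :
  s != [::] -> exists2 x, x \in s & forall y, y \in s -> (f y <= f x)%O.
Proof.
elim: s => [//|a s IHs] _.
have [->|/IHs [x xs x_max]] := eqVneq s [::].
  by exists a; rewrite ?mem_head // => y; rewrite inE => /eqP ->.
have [fax|fxa] := leP (f a) (f x).
  exists x; first by rewrite inE xs orbT.
  by move=> y; rewrite inE => /orP[/eqP ->|/x_max].
exists a; first exact: mem_head.
by move=> y; rewrite inE => /orP[/eqP ->//|/x_max fyx]; rewrite (le_trans fyx (ltW fxa)).
Qed.

(* If the leading monomials of [g] are "linearly independent", the leading
   monomial of [F \mPo g] comes from a single monomial of [F]. *)
Lemma comp_mpoly_eq0 (K M : nat) (g : K.-tuple {mpoly int[M]}) :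
  (forall j, tnth g j != 0) ->
  injective (fun a : 'X_{1..K} => (\sum_(j < K) mlead (tnth g j) *+ a j)%MM) ->
  forall F : {mpoly int[K]}, F \mPo g = 0 -> F = 0.
Proof.
move=> g_neq0 lead_inj F; apply: contra_eq => F_neq0.
pose XS (mu : 'X_{1..K}) := 'X_[mu] \mPo g.
have XS_neq0 mu : XS mu != 0.
  by rewrite /XS comp_mpolyX; apply/prodf_neq0 => i _; exact: expf_neq0.
have mlead_XS mu : mlead (XS mu) = (\sum_(j < K) mlead (tnth g j) *+ mu j)%MM.
  rewrite /XS comp_mpolyX mlead_prod; last by move=> i _ _; exact: expf_neq0.
  by apply: eq_bigr => i _; rewrite mleadX.
have suppF : msupp F != [::] by rewrite msupp_eq0.
have [mu0 mu0_F mu0_max] := exists_max_seq (fun mu => mlead (XS mu)) suppF.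
apply/eqP => /(congr1 (mcoeff (mlead (XS mu0)))); rewrite mcoeff0.
rewrite comp_mpolyEX raddf_sum /= (bigD1_seq mu0) ?msupp_uniq //= big1_seq.
  rewrite addr0 mcoeffZ; apply/eqP; rewrite mulf_neq0 ?mleadc_eq0 //.
  by rewrite -mcoeff_msupp.
move=> mu /andP[ne mu_F]; rewrite mcoeffZ (@mcoeff_gt_mlead _ _ (XS mu)) ?mulr0 //.
rewrite lt_neqAle mu0_max // andbT; apply: contra ne => /eqP eq_lead.
by apply/eqP/lead_inj; rewrite /= -!mlead_XS eq_lead.
Qed.

Lemma comp_mpolyA (K M : nat) (p : {mpoly int[K]}) (lq : K.-tuple {mpoly int[M]})
    (lr : M.-tuple {mpoly int[M]}) :
  (p \mPo lq) \mPo lr = p \mPo [tuple (tnth lq i) \mPo lr | i < K].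
Proof.
rewrite [p \mPo lq]comp_mpolyE [RHS]comp_mpolyE raddf_sum /=; apply: eq_bigr => mu _.
rewrite comp_mpolyZ rmorph_prod /=; congr (_ *: _); apply: eq_bigr => i _.
by rewrite rmorphXn tnth_mktuple.
Qed.

Lemma split_lshift m n (i : 'I_m) : split (lshift n i) = inl i.
Proof. exact: (unsplitK (inl _ i)). Qed.

Lemma split_rshift m n (i : 'I_n) : split (rshift m i) = inr i.
Proof. exact: (unsplitK (inr _ i)). Qed.

Section Independence.
Variables m n : nat.
Local Notation M := (m + m * n)%N.
Local Notation V := {mpoly int[M]}.

Definition epoint (j : 'I_M) : V :=
  match split j with inl i => efam (@yvar m n) i.+1 | inr k => efam (@xvar m n) k.+1 end.

Definition block_series (N : nat) (sg : 'I_N -> 'I_M) (t : 'I_M -> V) (i : nat) : V :=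
  if i is i'.+1 then (if insub i' is Some i0 then t (sg i0) else 0) else 1.

Definition point_series (j : 'I_M) (t : 'I_M -> V) : nat -> V :=
  match split j with
  | inl _ => block_series (lshift (m * n)) t
  | inr _ => block_series (@rshift m (m * n)) t
  end.

Definition point_deg (j : 'I_M) : nat :=
  match split j with inl i => i.+1 | inr k => k.+1 end.

(* Newton's identities as a change of variables; the same polynomials express
   the [h]'s through the [e]'s and back, as inverting a series is an involution. *)
Definition transition (j : 'I_M) : V :=
  series_inv (point_series j (fun i => 'X_i)) (point_deg j).

Definition htuple : M.-tuple V := [tuple @hpoint m n j | j < M].
Definition etuple : M.-tuple V := [tuple epoint j | j < M].
Definition ttuple : M.-tuple V := [tuple transition j | j < M].

Lemma comp_transition j (t : M.-tuple V) :
  transition j \mPo t = series_inv (point_series j (tnth t)) (point_deg j).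
Proof.
rewrite /transition (rmorph_series_inv (comp_mpoly t)); congr series_inv.
apply: funext => i; rewrite /point_series /=; case: split => _; case: i => [|i] /=;
  rewrite ?rmorph1 //; case: insub => [i0|] /=;
  by rewrite ?comp_mpoly0 // comp_mpolyXU -tnth_nth.
Qed.

Lemma block_series_eq (N : nat) (sg : 'I_N -> 'I_M) (t : 'I_M -> V) (f : nat -> V) K :
  (K <= N)%N -> (forall i0 : 'I_N, t (sg i0) = f (val i0).+1) ->
  forall k, (0 < k <= K)%N -> block_series sg t k = f k.
Proof.
move=> KN tf [//|k] /andP[_ kK] /=.
case: insubP => [i0 _ /= <-|]; first exact: tf.
by rewrite (leq_trans kK KN).
Qed.

Lemma transition_epoint j : transition j \mPo etuple = @hpoint m n j.
Proof.
rewrite comp_transition /point_series /point_deg /hpoint.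
case: (split j) => [i|k].
- rewrite -series_inv_efam; apply/eq_series_inv/(block_series_eq (ltn_ord i)) => i0.
  by rewrite tnth_mktuple /epoint split_lshift.
- rewrite -series_inv_efam; apply/eq_series_inv/(block_series_eq (ltn_ord k)) => i0.
  by rewrite tnth_mktuple /epoint split_rshift.
Qed.

Lemma transition_hpoint j : transition j \mPo htuple = epoint j.
Proof.
rewrite comp_transition /point_series /point_deg /epoint.
case: (split j) => [i|k].
- rewrite -series_inv_hfam; apply/eq_series_inv/(block_series_eq (ltn_ord i)) => i0.
  by rewrite tnth_mktuple /hpoint split_lshift.
- rewrite -series_inv_hfam; apply/eq_series_inv/(block_series_eq (ltn_ord k)) => i0.
  by rewrite tnth_mktuple /hpoint split_rshift.
Qed.

(* The leading monomial of [epoint j] is the product of the variables of the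
   block of [j] up to [j]. *)
Definition lead_set (j : 'I_M) : {set 'I_M} :=
  [set nu : 'I_M | (nu <= j)%N && ((m <= nu)%N || (j < m)%N)].

Lemma mlead_epoint j : epoint j != 0 /\ mlead (epoint j) = mesym1 (lead_set j).
Proof.
rewrite /epoint; case: splitP => [i ji | k jk].
- have sgE (i0 : 'I_m) : val (lshift (m * n) i0) = (0 + val i0)%N by [].
  have [-> ->] := mlead_efam_block sgE (ltn_ord i); split => //.
  congr mesym1; apply/setP => nu.
  by rewrite (mem_block_init sgE) ?ltn_ord // !inE ji (ltn_ord i) orbT andbT add0n ltnS.
- have sgE (k0 : 'I_(m * n)) : val (@rshift m (m * n) k0) = (m + val k0)%N by [].
  have [-> ->] := mlead_efam_block sgE (ltn_ord k); split => //.
  congr mesym1; apply/setP => nu.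
  rewrite (mem_block_init sgE) ?ltn_ord // !inE jk [(m + k < m)%N]ltnNge leq_addr.
  by rewrite orbF addnS ltnS andbC.
Qed.

(* The matrix [(nu \in lead_set j)] is triangular with unit diagonal. *)
Lemma epoint_lead_inj :
  injective (fun a : 'X_{1..M} => (\sum_(j < M) mlead (tnth etuple j) *+ a j)%MM).
Proof.
move=> a b /= eq_ab.
have sumE (c : 'X_{1..M}) nu : ((\sum_(j < M) mlead (tnth etuple j) *+ c j)%MM nu =
    \sum_(j < M) (nu \in lead_set j) * c j)%N.
  rewrite mnm_sumE; apply: eq_bigr => j _.
  by rewrite mulmnE tnth_mktuple (mlead_epoint j).2 mnmE.
suff ab d (nu : 'I_M) : (M - nu)%N = d -> a nu = b nu by apply/mnmP => nu; exact: ab.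
elim/ltn_ind: d nu => d IH nu dE.
move: (congr1 (fun c : 'X_{1..M} => c nu) eq_ab); rewrite /= !sumE.
have nu_nu : nu \in lead_set nu by rewrite inE leqnn /=; case: leqP.
rewrite (bigD1 nu) //= [in X in _ = X](bigD1 nu) //= nu_nu !mul1n.
rewrite (eq_bigr (fun j => (nu \in lead_set j) * b j)%N); first by move/addIn.
move=> j ne; case nu_j : (nu \in lead_set j); rewrite ?mul0n // !mul1n.
move: nu_j; rewrite inE => /andP[le _].
have lt : (nu < j)%N by rewrite ltn_neqAle le andbT; apply: contra ne => /eqP/val_inj ->.
by apply: (IH (M - j)%N) => //; have := ltn_ord j; lia.
Qed.

Lemma epoint_indep (F : V) : F \mPo etuple = 0 -> F = 0.
Proof.
apply: comp_mpoly_eq0 _ epoint_lead_inj F => j.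
by rewrite tnth_mktuple; case: (mlead_epoint j).
Qed.

Lemma hpoint_indep (F : V) : F \mPo htuple = 0 -> F = 0.
Proof.
have te : [tuple (tnth ttuple i) \mPo etuple | i < M] = htuple.
  by apply: eq_mktuple => i; rewrite tnth_mktuple transition_epoint.
have th : [tuple (tnth ttuple i) \mPo htuple | i < M] = etuple.
  by apply: eq_mktuple => i; rewrite tnth_mktuple transition_hpoint.
move=> F_h0; have F_t0 : F \mPo ttuple = 0.
  by apply: epoint_indep; rewrite comp_mpolyA te.
by apply: epoint_indep; rewrite -th -comp_mpolyA F_t0 comp_mpoly0.
Qed.

Lemma meval_hpoint (Q : V) : meval_int Q (@hpoint m n) = Q \mPo htuple.
Proof.
rewrite /meval_int comp_mpolyE; apply: eq_bigr => mu _.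
rewrite -mul_mpolyC; congr (_ * _).
  by rewrite -[in RHS](intz (Q@_mu)) rmorph_int.
by apply: eq_bigr => i _; rewrite tnth_mktuple.
Qed.

End Independence.

Lemma Pmn_unique m n (Q1 Q2 : {mpoly int[m + m * n]}) :
  is_Pmn Q1 -> is_Pmn Q2 -> Q1 = Q2.
Proof.
rewrite /is_Pmn !meval_hpoint => -> /eqP.
rewrite -subr_eq0 -comp_mpolyB => /eqP /hpoint_indep /eqP.
by rewrite subr_eq0 => /eqP.
Qed.

Lemma lsp_Pmn_exists (R : comPzRingType) (sig : nat -> R -> R) (a : R) :
  lsp sig a -> forall m n, exists Q : {mpoly int[m + m * n]}, is_Pmn Q.
Proof. by move=> a_sp m n; have [Q [PQ _]] := a_sp 0 m n; exists Q. Qed.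

Section Adjoin.
Variables (R : comPzRingType) (sig : nat -> R -> R) (A : Type) (P : A -> seq R).

Definition root_model (S : comPzRingType) (sS : nat -> S -> S) (g : R -> S) (y : A -> S) :=
  [/\ is_lambda sS, lambda_hom sig sS g, (forall al, lsp sS (y al)) &
      (forall al, peval (map g (P al)) (y al) = 0)].

Inductive term : Type :=
| Const of R | Root of A | Zero | One
| Add of term & term | Opp of term | Mul of term & term | Sig of nat & term.

Fixpoint term_eval (S : comPzRingType) (sS : nat -> S -> S) (g : R -> S) (y : A -> S)
    (t : term) : S :=
  match t with
  | Const r => g r | Root al => y al | Zero => 0 | One => 1
  | Add s u => term_eval sS g y s + term_eval sS g y u
  | Opp s => - term_eval sS g y s
  | Mul s u => term_eval sS g y s * term_eval sS g y u
  | Sig k s => sS k (term_eval sS g y s)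
  end.

Definition term_equiv (s t : term) : Prop :=
  forall S sS g y, @root_model S sS g y -> term_eval sS g y s = term_eval sS g y t.

Definition adjoin := {X : term -> Prop | exists t, X = term_equiv t}.

Definition adjoin_class (t : term) : adjoin := exist _ (term_equiv t) (ex_intro _ t erefl).

Definition adjoin_repr (c : adjoin) : term := sval (cid (svalP c)).

Lemma adjoin_eq (c d : adjoin) : sval c = sval d -> c = d.
Proof.
by case: c d => X cX [Y dY] /= XY; subst Y; congr exist; exact: Prop_irrelevance.
Qed.

Lemma adjoin_class_eq s t : term_equiv s t -> adjoin_class s = adjoin_class t.
Proof.
move=> st; apply/adjoin_eq/funext => u /=; apply/propext.
by split => eq_u S sS g y Sy; rewrite -eq_u // st.
Qed.

Lemma adjoin_reprK c : adjoin_class (adjoin_repr c) = c.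
Proof. by apply: adjoin_eq; rewrite /adjoin_repr; case: cid. Qed.

Lemma adjoin_class_repr t : term_equiv (adjoin_repr (adjoin_class t)) t.
Proof. by have /(congr1 sval) /= -> := adjoin_reprK (adjoin_class t). Qed.

Section Eval.
Variables (S : comPzRingType) (sS : nat -> S -> S) (g : R -> S) (y : A -> S).

Definition adjoin_eval (c : adjoin) : S := term_eval sS g y (adjoin_repr c).

Lemma adjoin_eval_class t :
  root_model sS g y -> adjoin_eval (adjoin_class t) = term_eval sS g y t.
Proof. exact: adjoin_class_repr. Qed.

End Eval.

Lemma adjoin_ext c d :
  (forall S sS g y, @root_model S sS g y -> adjoin_eval sS g y c = adjoin_eval sS g y d) ->
  c = d.
Proof.
by move=> cd; rewrite -(adjoin_reprK c) -(adjoin_reprK d); apply: adjoin_class_eq.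
Qed.

Definition adjoin_zero := adjoin_class Zero.
Definition adjoin_one := adjoin_class One.
Definition adjoin_add c d := adjoin_class (Add (adjoin_repr c) (adjoin_repr d)).
Definition adjoin_opp c := adjoin_class (Opp (adjoin_repr c)).
Definition adjoin_mul c d := adjoin_class (Mul (adjoin_repr c) (adjoin_repr d)).
Definition adjoin_sig k c := adjoin_class (Sig k (adjoin_repr c)).

Section EvalOps.
Variables (S : comPzRingType) (sS : nat -> S -> S) (g : R -> S) (y : A -> S).
Hypothesis Sy : root_model sS g y.
Local Notation ev := (adjoin_eval sS g y).

Lemma adjoin_eval_zero : ev adjoin_zero = 0. Proof. exact: adjoin_eval_class. Qed.
Lemma adjoin_eval_one : ev adjoin_one = 1. Proof. exact: adjoin_eval_class. Qed.
Lemma adjoin_eval_add c d : ev (adjoin_add c d) = ev c + ev d.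
Proof. exact: adjoin_eval_class. Qed.
Lemma adjoin_eval_opp c : ev (adjoin_opp c) = - ev c. Proof. exact: adjoin_eval_class. Qed.
Lemma adjoin_eval_mul c d : ev (adjoin_mul c d) = ev c * ev d.
Proof. exact: adjoin_eval_class. Qed.
Lemma adjoin_eval_sig k c : ev (adjoin_sig k c) = sS k (ev c).
Proof. exact: adjoin_eval_class. Qed.

End EvalOps.

Ltac adjoin_eval_simpl Sy :=
  rewrite ?(adjoin_eval_zero Sy, adjoin_eval_one Sy, adjoin_eval_add Sy,
            adjoin_eval_opp Sy, adjoin_eval_mul Sy, adjoin_eval_sig Sy).

Ltac adjoin_by_eval :=
  apply: adjoin_ext => ? ? ? ? ?;
  match goal with Sy : root_model _ _ _ |- _ => adjoin_eval_simpl Sy end.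

Lemma adjoin_addA : associative adjoin_add.
Proof. by move=> a b c; adjoin_by_eval; rewrite addrA. Qed.
Lemma adjoin_addC : commutative adjoin_add.
Proof. by move=> a b; adjoin_by_eval; rewrite addrC. Qed.
Lemma adjoin_add0 : left_id adjoin_zero adjoin_add.
Proof. by move=> a; adjoin_by_eval; rewrite add0r. Qed.
Lemma adjoin_addN : left_inverse adjoin_zero adjoin_opp adjoin_add.
Proof. by move=> a; adjoin_by_eval; rewrite addNr. Qed.
Lemma adjoin_mulA : associative adjoin_mul.
Proof. by move=> a b c; adjoin_by_eval; rewrite mulrA. Qed.
Lemma adjoin_mulC : commutative adjoin_mul.
Proof. by move=> a b; adjoin_by_eval; rewrite mulrC. Qed.
Lemma adjoin_mul1 : left_id adjoin_one adjoin_mul.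
Proof. by move=> a; adjoin_by_eval; rewrite mul1r. Qed.
Lemma adjoin_mulDl : left_distributive adjoin_mul adjoin_add.
Proof. by move=> a b c; adjoin_by_eval; rewrite mulrDl. Qed.

HB.instance Definition _ := gen_eqMixin adjoin.
HB.instance Definition _ := gen_choiceMixin adjoin.
HB.instance Definition _ :=
  GRing.isZmodule.Build adjoin adjoin_addA adjoin_addC adjoin_add0 adjoin_addN.
HB.instance Definition _ :=
  GRing.Zmodule_isComPzRing.Build adjoin adjoin_mulA adjoin_mulC adjoin_mul1 adjoin_mulDl.

Definition adjoin_of (r : R) : adjoin := adjoin_class (Const r).
Definition adjoin_root (al : A) : adjoin := adjoin_class (Root al).

Section EvalHom.
Variables (S : comPzRingType) (sS : nat -> S -> S) (g : R -> S) (y : A -> S).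
Hypothesis Sy : root_model sS g y.

Lemma adjoin_eval_hom : ring_hom (adjoin_eval sS g y).
Proof.
by split; [exact: adjoin_eval_one | exact: adjoin_eval_add | exact: adjoin_eval_mul].
Qed.

Lemma adjoin_eval_of r : adjoin_eval sS g y (adjoin_of r) = g r.
Proof. exact: adjoin_eval_class. Qed.

Lemma adjoin_eval_root al : adjoin_eval sS g y (adjoin_root al) = y al.
Proof. exact: adjoin_eval_class. Qed.

End EvalHom.

Lemma adjoin_lambda : is_lambda adjoin_sig.
Proof.
split=> [a|a|k|k a b]; apply: adjoin_ext => S sS g y Sy; adjoin_eval_simpl Sy;
  case: (Sy) => -[sig0 sig1 sig_zero sig_add] _ _ _ //.
rewrite (ring_hom_sum (adjoin_eval_hom Sy)) sig_add; apply: eq_bigr => i _.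
by rewrite adjoin_eval_mul // !adjoin_eval_sig.
Qed.

Lemma adjoin_of_lambda_hom : lambda_hom sig adjoin_sig adjoin_of.
Proof.
split; first split => [|a b|a b]; try move=> k a;
  apply: adjoin_ext => S sS g y Sy; adjoin_eval_simpl Sy; rewrite !adjoin_eval_of //;
  by case: Sy => _ [[g1 gD gM] g_sig].
Qed.

Lemma adjoin_root_special al :
  (forall m n, exists Q : {mpoly int[m + m * n]}, is_Pmn Q) ->
  lsp adjoin_sig (adjoin_root al).
Proof.
move=> Pmn_exists b m n; have [Q PQ] := Pmn_exists m n; exists Q; split => //.
apply: adjoin_ext => S sS g y Sy; adjoin_eval_simpl Sy.
rewrite adjoin_eval_root // (ring_hom_meval (adjoin_eval_hom Sy)).
case: (Sy) => _ _ /(_ al (adjoin_eval sS g y b) m n) [Q' [PQ' ->]] _.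
rewrite (Pmn_unique PQ PQ'); congr meval_int; apply: funext => j /=.
by case: split => i; rewrite adjoin_eval_sig // adjoin_eval_root.
Qed.

Lemma peval_adjoin_root al : peval (map adjoin_of (P al)) (adjoin_root al) = 0.
Proof.
apply: adjoin_ext => S sS g y Sy; adjoin_eval_simpl Sy.
rewrite (ring_hom_peval (adjoin_eval_hom Sy)) -map_comp adjoin_eval_root //.
by rewrite (eq_map (adjoin_eval_of Sy)); case: Sy.
Qed.

Lemma adjoin_class_add s u : adjoin_class (Add s u) = adjoin_class s + adjoin_class u.
Proof. by adjoin_by_eval; rewrite !adjoin_eval_class. Qed.

Lemma adjoin_class_opp s : adjoin_class (Opp s) = - adjoin_class s.
Proof. by adjoin_by_eval; rewrite !adjoin_eval_class. Qed.

Lemma adjoin_class_mul s u : adjoin_class (Mul s u) = adjoin_class s * adjoin_class u.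
Proof. by adjoin_by_eval; rewrite !adjoin_eval_class. Qed.

Lemma adjoin_class_sig k s : adjoin_class (Sig k s) = adjoin_sig k (adjoin_class s).
Proof. by adjoin_by_eval; rewrite !adjoin_eval_class. Qed.

Lemma lambda_hom_adjoin_class (S : comPzRingType) (sS : nat -> S -> S) (g : R -> S)
    (y : A -> S) (h : adjoin -> S) :
  lambda_hom adjoin_sig sS h -> (forall r, h (adjoin_of r) = g r) ->
  (forall al, h (adjoin_root al) = y al) ->
  forall t, h (adjoin_class t) = term_eval sS g y t.
Proof.
move=> [h_hom h_sig] h_of h_root.
elim=> [r|al||| s IHs u IHu | s IHs | s IHs u IHu | k s IHs] /=.
- exact: h_of.
- exact: h_root.
- exact: ring_hom0 h_hom.
- exact: ring_hom1 h_hom.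
- by rewrite adjoin_class_add (ring_homD h_hom) IHs IHu.
- by rewrite adjoin_class_opp (ring_homN h_hom) IHs.
- by rewrite adjoin_class_mul (ring_homM h_hom) IHs IHu.
- by rewrite adjoin_class_sig h_sig IHs.
Qed.

Lemma adjoin_universal (S : comPzRingType) (sS : nat -> S -> S) (g : R -> S) (y : A -> S) :
  is_lambda sS -> lambda_hom sig sS g -> (forall al, lsp sS (y al)) ->
  (forall al, peval (map g (P al)) (y al) = 0) ->
  exists h : adjoin -> S,
    [/\ lambda_hom adjoin_sig sS h,
        (forall r, h (adjoin_of r) = g r),
        (forall al, h (adjoin_root al) = y al) &
        (forall h' : adjoin -> S,
           lambda_hom adjoin_sig sS h' ->
           (forall r, h' (adjoin_of r) = g r) ->
           (forall al, h' (adjoin_root al) = y al) ->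
           forall c, h' c = h c)].
Proof.
move=> sS_lambda g_hom y_sp y_root.
have Sy : root_model sS g y by [].
exists (adjoin_eval sS g y); split.
- by split=> [|k c]; [exact: adjoin_eval_hom | exact: adjoin_eval_sig].
- exact: adjoin_eval_of.
- exact: adjoin_eval_root.
move=> h' h'_hom h'_of h'_root c.
rewrite -(adjoin_reprK c) (lambda_hom_adjoin_class h'_hom h'_of h'_root).
by rewrite adjoin_eval_class.
Qed.

End Adjoin.

Theorem mainTheorem5 (R : comPzRingType) (sig : nat -> R -> R) (A : Type)
    (P : A -> seq R) :
  is_lambda sig ->
  (forall al i, lsp sig (P al)`_i) ->
  exists (R' : comPzRingType) (sig' : nat -> R' -> R') (f : R -> R') (x : A -> R'),
    [/\ is_lambda sig', lambda_hom sig sig' f,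
        (forall al, lsp sig' (x al)),
        (forall al, peval (map f (P al)) (x al) = 0) &
        (forall (R'' : comPzRingType) (sig'' : nat -> R'' -> R'') (g : R -> R'')
                (y : A -> R''),
           is_lambda sig'' -> lambda_hom sig sig'' g ->
           (forall al, lsp sig'' (y al)) ->
           (forall al, peval (map g (P al)) (y al) = 0) ->
           exists h : R' -> R'',
             [/\ lambda_hom sig' sig'' h,
                 (forall r, h (f r) = g r),
                 (forall al, h (x al) = y al) &
                 (forall h' : R' -> R'',
                    lambda_hom sig' sig'' h' ->
                    (forall r, h' (f r) = g r) ->
                    (forall al, h' (x al) = y al) ->
                    forall z, h' z = h z)])].
Proof.
move=> _ P_sp.
exists (adjoin sig P), (@adjoin_sig _ sig _ P), (@adjoin_of _ sig _ P),
  (@adjoin_root _ sig _ P).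
split.
- exact: adjoin_lambda.
- exact: adjoin_of_lambda_hom.
- (* Any special element of R witnesses that the P^{m,n} exist. *)
  by move=> al; apply/adjoin_root_special/lsp_Pmn_exists/(P_sp al 0%N).
- exact: peval_adjoin_root.
- exact: adjoin_universal.
Qed.
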